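(* Let $G=(V,E)$ be a connected graph, $s\in V$, and $\mathcal{T}$ the layering tree of $G$ with respect to $s$. Let $i\ge \ell(\mathcal{T})+2$ and $k\le i-\ell(\mathcal{T})-2$. Then $\mathcal{T}_k$ is determined by $G_i$ together with the layers $L_0,\dots,L_{i-1}$: for every $j\le k-1$, two vertices $u,v\in L_j$ lie in the same part of $\mathcal{T}$ if and only if they are connected in $G_i[L_{\ge j}]=G[L_j\cup\dots\cup L_{i-1}]$, and two parts at layers $\le k-1$ are adjacent in $\mathcal{T}$ iff some edge of $G_i$ joins them. In particular $\mathcal{T}_k$ can be computed from $G_i$ without any distance queries.
   Context: For a connected graph $G$ and root $s\in V(G)$, the BFS layers are $L_i=\{v: d_G(s,v)=i\}$ for $i\ge 0$, with $L_{\le k}=L_0\cup\dots\cup L_k$, $L_{\ge k}=\bigcup_{j\ge k}L_j$, $L_{-1}=\emptyset$. For each $i\ge 0$, let $S_i^1,\dots,S_i^{s_i}$ be the connected components of $G\setminus L_{\le i-1}$ (i.e. of $G[L_{\ge i}]$), and let $P_i^j=S_i^j\cap L_i$; the nonempty sets $P_i^j$ are the parts at layer (depth) $i$, and the set $\mathcal{P}$ of all parts over all layers partitions $V(G)$. The layering tree $\mathcal{T}=(\mathcal{P},\mathcal{E})$ has the parts as vertices, with $(P,P')\in\mathcal{E}$ iff some $u\in P$, $u'\in P'$ are adjacent in $G$. Its length is $\ell(\mathcal{T})=\max_{P\in\mathcal{P}}\max_{u,v\in P} d_G(u,v)$ (distances measured in $G$). $G_i=G[L_{\le i-1}]$ is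 the subgraph induced by the first $i$ layers, and $\mathcal{T}_k$ is the subtree of $\mathcal{T}$ induced by the parts at layers $0,1,\dots,k-1$. *)

From mathcomp Require Import all_boot.
Set Implicit Arguments. Unset Strict Implicit. Unset Printing Implicit Defensive.

(* A finite simple graph is a symmetric irreflexive relation e on a finType T. *)
Section Layering.
Variables (T : finType) (e : rel T).

Definition walk_of_len (n : nat) (u v : T) : bool :=
  [exists p : n.-tuple T, path e u p && (last u p == v)].

(* graph distance: least n such that a walk of length n from u to v exists.
   (In a connected graph a shortest walk has fewer than #|T| edges, so the
   search range iota 0 #|T| is exhaustive; for unreachable v it returns #|T|.) *)
Definition gdist (u v : T) : nat :=
  find (fun n => walk_of_len n u v) (iota 0 #|T|).

Definition connected_graph : Prop := forall u v : T, connect e u v.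

Definition conn_in (A : {set T}) (u v : T) : bool :=
  [&& u \in A, v \in A &
      connect (fun x y => [&& x \in A, y \in A & e x y]) u v].

Variable s : T.

(* BFS layers L_i, L_{>= i}, L_{<= i-1} (vertex set of G_i), L_j u ... u L_{i-1} *)
Definition layer (i : nat) : {set T} := [set v | gdist s v == i].
Definition layer_ge (i : nat) : {set T} := [set v | i <= gdist s v].
Definition layer_lt (i : nat) : {set T} := [set v | gdist s v < i].
Definition layer_range (j i : nat) : {set T} := [set v | j <= gdist s v < i].

(* the part of the layering tree containing u: u lies in L_d (d = d(s,u)),
   and the part is S \cap L_d where S is the component of G[L_{>= d}] containing u *)
Definition part (u : T) : {set T} :=
  let d := gdist s u in [set v in layer d | conn_in (layer_ge d) u v].

Definition parts : {set {set T}} := [set part u | u : T].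

Definition part_depth (P : {set T}) : nat :=
  if [pick x in P] is Some x then gdist s x else 0.

Definition tree_adj (P P' : {set T}) : Prop :=
  exists u u', [/\ u \in P, u' \in P' & e u u'].

Definition tree_length : nat :=
  \max_(P in parts) \max_(u in P) \max_(v in P) gdist u v.

End Layering.

From mathcomp Require Import all_boot zify.
Set Implicit Arguments. Unset Strict Implicit. Unset Printing Implicit Defensive.

(* Two vertices u, v of L_j in the same part are joined by a walk in L_{>= j}.
   Pick a middle layer m with 2m ~ 2j + l (l the tree length) and retract every
   vertex deeper than m to an ancestor in L_m reachable inside L_{>= m}.  An edge
   of the walk either stays at depth <= m, or both its ends retract into one part
   of layer m; those two ancestors are then at distance <= l, so a shortest path
   between them only visits depths in [m - l/2, m + l/2], a subset of [j, i).
   Hence the retracted walk lives in G[L_j u ... u L_{i-1}]. *)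

Section Walks.
Variables (T : finType) (e : rel T).
Hypothesis e_sym : symmetric e.
Hypothesis Gconn : connected_graph e.

Lemma walk_of_lenP n u v :
  reflect (exists2 p : seq T, size p = n & path e u p /\ last u p = v)
          (walk_of_len e n u v).
Proof.
apply: (iffP existsP) => [[p /andP [Hp /eqP Hl]] | [p Hs [Hp Hl]]].
  by exists (val p); rewrite ?size_tuple.
have Hs' : size p == n by apply/eqP.
by exists (Tuple Hs'); rewrite /= Hp Hl eqxx.
Qed.

Lemma gdist_le n u v : walk_of_len e n u v -> gdist e u v <= n.
Proof.
move=> W; rewrite /gdist; case: (ltnP n #|T|) => Hn.
  rewrite leqNgt; apply/negP => /(before_find 0).
  by rewrite nth_iota // add0n W.
by apply: leq_trans (find_size _ _) _; rewrite size_iota.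
Qed.

Lemma gdist_walk u v : walk_of_len e (gdist e u v) u v.
Proof.
have [p Hp ->] := connectP (Gconn u v).
have [p' Hp' Hu _] := shortenP Hp.
have Hsz : size p' < #|T|.
  by have := max_card (mem (u :: p')); rewrite (card_uniqP Hu).
have Hh : has (fun n => walk_of_len e n u (last u p')) (iota 0 #|T|).
  by apply/hasP; exists (size p'); rewrite ?mem_iota //; apply/walk_of_lenP; exists p'.
have := nth_find 0 Hh; rewrite nth_iota ?add0n //.
by move: Hh; rewrite has_find size_iota.
Qed.

Lemma gdist_sym u v : gdist e u v = gdist e v u.
Proof.
suff gdist_rev x y : gdist e y x <= gdist e x y.
  by apply/eqP; rewrite eqn_leq !gdist_rev.
have /walk_of_lenP [p <- [Hp <-]] := gdist_walk x y.
apply/gdist_le/walk_of_lenP; exists (rev (belast x p)).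
  by rewrite size_rev size_belast.
split; first by rewrite rev_path (eq_path (e' := e)) // => a b; exact: e_sym.
by case: p {Hp} => //= h p; rewrite rev_cons last_rcons.
Qed.

Lemma gdist_triangle u v w : gdist e u w <= gdist e u v + gdist e v w.
Proof.
have /walk_of_lenP [p <- [Hp Hl]] := gdist_walk u v.
have /walk_of_lenP [q <- [Hq <-]] := gdist_walk v w.
apply/gdist_le/walk_of_lenP; exists (p ++ q); rewrite ?size_cat //.
by rewrite cat_path last_cat Hl Hp Hq.
Qed.

Lemma gdist_edge u x y : e x y -> gdist e u y <= (gdist e u x).+1.
Proof.
move=> Hxy; apply: leq_trans (gdist_triangle u x y) _.
rewrite -addn1 leq_add2l gdist_le //.
by apply/walk_of_lenP; exists [:: y]; rewrite //= Hxy.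
Qed.

Lemma mem_path_gdist x p z : path e x p -> z \in x :: p ->
  gdist e x z + gdist e z (last x p) <= size p.
Proof.
move=> Hp Hz; case/splitPl: Hz Hp => p1 p2 Hz; rewrite cat_path last_cat Hz size_cat.
case/andP=> H1 H2; rewrite leq_add // gdist_le //; apply/walk_of_lenP.
  by exists p1.
by exists p2.
Qed.

Definition induced (A : {set T}) : rel T :=
  fun x y => [&& x \in A, y \in A & e x y].

Lemma path_connect_induced (A : {set T}) x p :
  path e x p -> all [in A] (x :: p) -> connect (induced A) x (last x p).
Proof.
move=> Hp HA; apply/connectP; exists p => //.
by apply: sub_in_path HA Hp => a b Ha Hb Hab; rewrite /induced Ha Hb.
Qed.

Lemma conn_in_refl (A : {set T}) u : u \in A -> conn_in e A u u.
Proof. by move=> Hu; rewrite /conn_in Hu connect0. Qed.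

Lemma conn_in_edge (A : {set T}) u v :
  u \in A -> v \in A -> e u v -> conn_in e A u v.
Proof. by move=> Hu Hv Huv; rewrite /conn_in Hu Hv connect1 // /induced Hu Hv. Qed.

Lemma conn_in_sym (A : {set T}) u v : conn_in e A u v -> conn_in e A v u.
Proof.
have induced_sym : symmetric (induced A).
  by move=> a b; rewrite /induced e_sym andbCA.
case/and3P=> Hu Hv Huv; rewrite /conn_in Hu Hv /=.
by rewrite (sym_connect_sym induced_sym).
Qed.

Lemma conn_in_trans (A : {set T}) u v w :
  conn_in e A u v -> conn_in e A v w -> conn_in e A u w.
Proof.
case/and3P=> Hu _ Huv /and3P [_ Hw Hvw]; rewrite /conn_in Hu Hw /=.
exact: connect_trans Huv Hvw.
Qed.

Lemma conn_in_sub (A B : {set T}) u v :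
  A \subset B -> conn_in e A u v -> conn_in e B u v.
Proof.
move=> /subsetP sAB /and3P [Hu Hv Huv]; rewrite /conn_in !sAB //=.
apply: connect_sub Huv => a b /and3P [Ha Hb Hab].
by apply: connect1; rewrite /induced !sAB.
Qed.

End Walks.

Section Parts.
Variables (T : finType) (e : rel T) (s : T).
Hypothesis e_sym : symmetric e.
Hypothesis Gconn : connected_graph e.
Local Notation d := (gdist e s).
Local Notation l := (tree_length e s).

Lemma mem_part x u :
  (u \in part e s x) = (d u == d x) && conn_in e (layer_ge e s (d x)) x u.
Proof. by rewrite !inE. Qed.

Lemma mem_part_depth x u : u \in part e s x -> d u = d x.
Proof. by rewrite mem_part => /andP [/eqP]. Qed.

Lemma conn_in_same_part x u v :
  u \in part e s x -> v \in part e s x -> conn_in e (layer_ge e s (d u)) u v.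
Proof.
rewrite !mem_part => /andP [/eqP -> Cxu] /andP [_ Cxv].
exact: conn_in_trans (conn_in_sym e_sym Cxu) Cxv.
Qed.

Lemma mem_part_conn_in u v :
  d v = d u -> conn_in e (layer_ge e s (d u)) u v -> v \in part e s u.
Proof. by rewrite mem_part => -> ->; rewrite eqxx. Qed.

Lemma part_self x : x \in part e s x.
Proof. by rewrite mem_part eqxx conn_in_refl // inE. Qed.

Lemma part_in_parts x : part e s x \in parts e s.
Proof. exact: imset_f. Qed.

Lemma part_depth_part x : part_depth e s (part e s x) = d x.
Proof.
rewrite /part_depth; case: pickP => [z /mem_part_depth // | /(_ x)].
by rewrite part_self.
Qed.

Lemma gdist_le_tree_length a b :
  d a = d b -> conn_in e (layer_ge e s (d a)) a b -> gdist e a b <= l.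
Proof.
move=> Hab Cab; have Hb := mem_part_conn_in (esym Hab) Cab.
apply: leq_trans (leq_bigmax_cond _ (part_in_parts a)).
apply: leq_trans (leq_bigmax_cond _ (part_self a)).
exact: leq_bigmax_cond Hb.
Qed.

Lemma exists_parent w n : d w = n.+1 -> exists2 w', e w' w & d w' = n.
Proof.
move=> Hw; have /walk_of_lenP [p] := gdist_walk Gconn s w.
rewrite Hw; case/lastP: p => [|q x] //.
rewrite size_rcons rcons_path last_rcons => -[Hs] [/andP [Hq Hx] Ex].
subst x; exists (last s q) => //; apply/eqP; rewrite eqn_leq.
rewrite gdist_le; last by apply/walk_of_lenP; exists q.
by have := gdist_edge Gconn s Hx; rewrite Hw.
Qed.

Lemma exists_ancestor m w :
  m <= d w -> exists2 a, d a = m & conn_in e (layer_ge e s m) a w.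
Proof.
move=> Hmw; have [n] : exists n, d w = n + m by exists (d w - m); rewrite subnK.
elim: n w {Hmw} => [|n IH] w Hw.
  by exists w; rewrite ?Hw // conn_in_refl // inE Hw.
have [w' Hw'w Hw'] := exists_parent (etrans Hw (addSn n m)).
have [a Ha Caw'] := IH w' Hw'; exists a => //.
by apply: conn_in_trans Caw' (conn_in_edge _ _ Hw'w); rewrite inE ?Hw ?Hw'; lia.
Qed.

Lemma close_connect_range j i a b :
  d a = d b -> 2 * j + gdist e a b <= 2 * d a -> 2 * d a + gdist e a b < 2 * i ->
  connect (induced e (layer_range e s j i)) a b.
Proof.
move=> Hab Hj Hi; have /walk_of_lenP [p Hs [Hp Hb]] := gdist_walk Gconn a b; subst b.
apply: (path_connect_induced Hp); apply/allP => z Hz.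
have := mem_path_gdist Hp Hz; rewrite Hs.
have := gdist_triangle Gconn s a z; have := gdist_triangle Gconn s z a.
have := gdist_triangle Gconn s (last a p) z.
have := gdist_triangle Gconn s z (last a p).
rewrite inE (gdist_sym e_sym Gconn z a) (gdist_sym e_sym Gconn z (last a p)).
lia.
Qed.

Section Retraction.
Variables (j i m : nat).
Hypothesis mid_low : 2 * j + l <= 2 * m.
Hypothesis mid_high : 2 * m + l < 2 * i.

Definition retract w :=
  if d w <= m then w
  else odflt w [pick a | (d a == m) && conn_in e (layer_ge e s m) a w].

Lemma retract_id w : d w <= m -> retract w = w.
Proof. by rewrite /retract => ->. Qed.

Lemma retract_ancestor w :
  m <= d w -> d (retract w) = m /\ conn_in e (layer_ge e s m) (retract w) w.
Proof.
rewrite /retract => Hmw; case: leqP => [Hwm | _].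
  have Hw : d w = m by lia.
  by rewrite Hw; split; rewrite // conn_in_refl // inE Hw.
case: pickP => [a /andP [/eqP] // | Hnone].
have [a Ha Caw] := exists_ancestor Hmw.
by have := Hnone a; rewrite Ha eqxx Caw.
Qed.

Lemma retract_edge x y : induced e (layer_ge e s j) x y ->
  connect (induced e (layer_range e s j i)) (retract x) (retract y).
Proof.
case/and3P; rewrite !inE => Hx Hy Hxy.
have Hdy := gdist_edge Gconn s Hxy.
have Hdx := gdist_edge Gconn s (etrans (e_sym y x) Hxy).
have below : d x <= m -> d y <= m ->
    connect (induced e (layer_range e s j i)) (retract x) (retract y).
  move=> Hxm Hym; rewrite !retract_id //; apply: connect1.
  by rewrite /induced !inE Hxy andbT; lia.
have [Hxm | Hmx] := ltnP (d x) m; first by apply: below; lia.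
have [Hym | Hmy] := ltnP (d y) m; first by apply: below; lia.
have [Hrx Cx] := retract_ancestor Hmx; have [Hry Cy] := retract_ancestor Hmy.
have Crxy : conn_in e (layer_ge e s m) (retract x) (retract y).
  apply: conn_in_trans Cx (conn_in_trans _ (conn_in_sym e_sym Cy)).
  by apply: conn_in_edge; rewrite // inE.
have Hl : gdist e (retract x) (retract y) <= l.
  by apply: gdist_le_tree_length; rewrite Hrx ?Hry.
by apply: close_connect_range; rewrite ?Hrx ?Hry //; lia.
Qed.

End Retraction.

Lemma conn_in_layer_range j i u v : j + l < i -> d u = j -> d v = j ->
  conn_in e (layer_ge e s j) u v -> conn_in e (layer_range e s j i) u v.
Proof.
move=> Hi Hu Hv /and3P [_ _ Cuv].
have [m Hjm Hmi] : exists2 m, 2 * j + l <= 2 * m & 2 * m + l < 2 * i.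
  by exists (j + uphalf l); have := odd_double_half l; rewrite uphalf_half -muln2; lia.
have Hr w : d w = j -> retract m w = w by move=> Hw; rewrite retract_id //; lia.
have Hji : j < i by lia.
rewrite /conn_in !inE Hu Hv leqnn Hji /=.
rewrite -(Hr u Hu) -(Hr v Hv); case/connectP: Cuv => p Hp -> {v Hv}.
elim: p u {Hu} Hp => [|y p IH] x /=; first by rewrite connect0.
case/andP=> Hxy Hp; apply: connect_trans (IH _ Hp).
exact: (retract_edge Hjm Hmi).
Qed.

End Parts.

Theorem mainTheorem4 (T : finType) (e : rel T) (s : T)
  (e_sym : symmetric e) (e_irr : irreflexive e)
  (Gconn : connected_graph e) (i k : nat) :
  tree_length e s + 2 <= i ->
  k <= i - (tree_length e s + 2) ->
  (forall j, j < k -> forall u v, u \in layer e s j -> v \in layer e s j ->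
     (exists2 P, P \in parts e s & (u \in P) && (v \in P)) <->
     conn_in e (layer_range e s j i) u v)
  /\
  (forall P P', P \in parts e s -> P' \in parts e s ->
     part_depth e s P < k -> part_depth e s P' < k ->
     tree_adj e P P' <->
     exists u u', [/\ u \in P, u' \in P', u \in layer_lt e s i, u' \in layer_lt e s i & e u u']).
Proof.
move=> Hi Hk; split=> [j Hj u v | P P' /imsetP [x _ ->] /imsetP [y _ ->]].
  rewrite !inE => /eqP Hu /eqP Hv.
  split=> [[_ /imsetP [x _ ->] /andP [Hux Hvx]] | Cuv].
    apply: conn_in_layer_range => //; first lia.
    by rewrite -Hu; exact: conn_in_same_part Hux Hvx.
  exists (part e s u); rewrite ?part_in_parts // part_self mem_part_conn_in ?Hu ?Hv //.
  by apply: conn_in_sub Cuv; apply/subsetP => z; rewrite !inE => /andP [].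
rewrite !part_depth_part => Hx Hy; split; last by case=> a [b [Ha Hb _ _ Hab]]; exists a, b.
case=> a [b [Ha Hb Hab]]; exists a, b; split=> //;
  by rewrite inE ?(mem_part_depth Ha) ?(mem_part_depth Hb); lia.
Qed.
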